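(* Assume (A1), (A2), (A3). Then for all $x,v\in\mathbb R^d$ and every probability measure $\mu$ on $\mathbb R^d$ with finite first moment, \[H(x,v)\ge24U(x)+\lambda|x|^2+12\Big|v+\frac x2\Big|^2,\] \[\mathcal L_\mu H(x,v)\le B+L_W(6+8\lambda)\Big(\int|y|\,d\mu(y)\Big)^2-\Big(\frac34\lambda+\lambda^2\Big)|x|^2-\gamma H(x,v),\] \[\mathcal L_\mu H(x,v)\le B+\Big(\Big(\int|y|\,d\mu(y)\Big)^2-|x|^2\Big)\Big(\frac34\lambda+\lambda^2\Big)-\gamma H(x,v).\] In particular $H$ is non-negative and tends to $+\infty$ at infinity.
   Context: $U,W\in\mathcal C^1(\mathbb R^d)$. (A1): $U\ge0$ and there exist $\lambda>0$, $A\ge0$ with $\tfrac12\nabla U(x)\cdot x\ge\lambda(U(x)+|x|^2/4)-A$ for all $x$. (A2): $\nabla U$ is $L_U$-Lipschitz. (A3): $W$ even, $\nabla W$ is $L_W$-Lipschitz, $L_W<\lambda/8$. Fix $\tilde A\ge0$ with $U(x)\ge\frac\lambda6|x|^2-\tilde A$ for all $x$ (such a constant exists). Set $\gamma=\frac{\lambda}{2(\lambda+1)}$, $B=24(A+(\lambda-\gamma)\tilde A+d)$, and \[H(x,v)=24U(x)+(6(1-\gamma)+\lambda)|x|^2+12x\cdot v+12|v|^2.\] For $\mu$ with finite first moment, $\mathcal L_\mu\phi(x,v)=v\cdot\nabla_x\phi-(v+\nabla U(x)+\nabla W*\mu(x))\cdot\nabla_v\phi+\Delta_v\phi$, where $\nabla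 W*\mu(x)=\int\nabla W(x-y)\mu(dy)$. *)

From HB Require Import structures.
From mathcomp Require Import all_boot all_order all_algebra.
From mathcomp Require Import all_classical all_reals all_analysis.

Set Implicit Arguments.
Unset Strict Implicit.
Unset Printing Implicit Defensive.

Import Order.TTheory GRing.Theory Num.Theory.
Import numFieldNormedType.Exports.

Local Open Scope classical_set_scope.
Local Open Scope ring_scope.

Notation vec R d := 'rV[R]_d.

Section Defs.
Variables (R : realType) (d : nat).
Local Notation vec := 'rV[R]_d.

Definition dotp (u w : vec) : R := \sum_(i < d) u ord0 i * w ord0 i.
Definition enorm (u : vec) : R := Num.sqrt (dotp u u).

Definition ebasis (i : 'I_d) : vec := delta_mx ord0 i.

Definition grad (f : vec -> R) (x : vec) : vec :=
  \row_(i < d) ('D_(ebasis i) f) x.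

Definition lapl (f : vec -> R) (x : vec) : R :=
  \sum_(i < d) ('D_(ebasis i) ('D_(ebasis i) f)) x.

Definition borelRd := g_sigma_algebraType (@open vec).

Definition moment1 (mu : probability borelRd R) : R :=
  Rintegral mu setT (fun y : borelRd => enorm y).

Definition finite_moment1 (mu : probability borelRd R) : Prop :=
  mu.-integrable setT (fun y : borelRd => (enorm y)%:E).

Definition conv_grad (W : vec -> R) (mu : probability borelRd R) (x : vec) : vec :=
  \row_(i < d) Rintegral mu setT (fun y : borelRd => grad W (x - y) ord0 i).

Definition Lgen (U W : vec -> R) (mu : probability borelRd R)
    (phi : vec -> vec -> R) (x v : vec) : R :=
  dotp v (grad (fun y => phi y v) x)
  - dotp (v + grad U x + conv_grad W mu x) (grad (phi x) v)
  + lapl (phi x) v.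

Definition C1 (f : vec -> R) : Prop :=
  (forall x, differentiable f x) /\ continuous (grad f).

Definition gam (lam : R) : R := lam / (2 * (lam + 1)).

Definition Bconst (lam A At : R) : R :=
  24 * (A + (lam - gam lam) * At + d%:R).

Definition Hfun (U : vec -> R) (lam : R) (x v : vec) : R :=
  24 * U x + (6 * (1 - gam lam) + lam) * enorm x ^+ 2
  + 12 * dotp x v + 12 * enorm v ^+ 2.

End Defs.

(* Apart from the term 24 U, H is a quadratic form in (x, v), so L_mu H is computed in
   closed form; it involves grad U(x).x, which (A1) controls, and x.F, v.F with
   F = (grad W * mu)(x).  As W is even, grad W(0) = 0, so (A3) gives
   |F| <= L_W (|x| + \int |y| dmu).  After these substitutions, and the quadratic lower
   bound on U to absorb gamma H, the drift estimate reduces to the nonpositivity of a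
   quadratic form in |x|, |v| and \int |y| dmu, which is where L_W < lambda / 8 is used.
   The lower bounds on H only need gamma <= 1/2. *)

From HB Require Import structures.
From mathcomp Require Import all_boot all_order all_algebra.
From mathcomp Require Import all_classical all_reals all_analysis.
From mathcomp Require Import ring lra.

Set Implicit Arguments.
Unset Strict Implicit.
Unset Printing Implicit Defensive.

Import Order.TTheory GRing.Theory Num.Theory.
Import numFieldNormedType.Exports.

Local Open Scope classical_set_scope.
Local Open Scope ring_scope.

Section Euclid.
Variables (R : realType) (d : nat).
Local Notation vec := 'rV[R]_d.
Implicit Types u w z : vec.

Lemma dotpC u w : dotp u w = dotp w u.
Proof. by apply: eq_bigr => i _; rewrite mulrC. Qed.

Lemma dotpDl u w z : dotp (u + w) z = dotp u z + dotp w z.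
Proof. by rewrite /dotp -big_split; apply: eq_bigr => i _; rewrite mxE mulrDl. Qed.

Lemma dotpZl k u z : dotp (k *: u) z = k * dotp u z.
Proof. by rewrite /dotp mulr_sumr; apply: eq_bigr => i _; rewrite mxE mulrA. Qed.

Lemma dotpNl u z : dotp (- u) z = - dotp u z.
Proof. by rewrite -scaleN1r dotpZl mulN1r. Qed.

Lemma dotpDr u w z : dotp z (u + w) = dotp z u + dotp z w.
Proof. by rewrite dotpC dotpDl !(dotpC z). Qed.

Lemma dotpZr k u z : dotp z (k *: u) = k * dotp z u.
Proof. by rewrite dotpC dotpZl dotpC. Qed.

Lemma dotpNr u z : dotp z (- u) = - dotp z u.
Proof. by rewrite dotpC dotpNl dotpC. Qed.

Lemma dotpp_ge0 u : 0 <= dotp u u.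
Proof. by apply: sumr_ge0 => i _; rewrite -expr2 sqr_ge0. Qed.

Lemma enorm_ge0 u : 0 <= enorm u.
Proof. exact: sqrtr_ge0. Qed.

Lemma sqr_enorm u : enorm u ^+ 2 = dotp u u.
Proof. by rewrite sqr_sqrtr // dotpp_ge0. Qed.

Lemma enormN u : enorm (- u) = enorm u.
Proof. by rewrite /enorm dotpNl dotpNr opprK. Qed.

Lemma dotp_ebasis u i : dotp u (ebasis R i) = u ord0 i.
Proof.
rewrite /dotp (bigD1 i) //= big1 => [|j ji]; rewrite /ebasis mxE ?eqxx ?mulr1 ?addr0 //.
by rewrite (negbTE ji) mulr0.
Qed.

Lemma enorm_ebasis (i : 'I_d) : enorm (ebasis R i) = 1.
Proof. by rewrite /enorm dotp_ebasis /ebasis mxE !eqxx sqrtr1. Qed.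

Lemma dotp_CauchySchwarz u w : dotp u w ^+ 2 <= dotp u u * dotp w w.
Proof.
set A := dotp u u; set B := dotp w w; set p := dotp u w.
have [B0|B_gt0] := eqVneq B 0.
  have w0 i : w ord0 i = 0.
    move/eqP: B0; rewrite /B /dotp psumr_eq0 => [|j _]; last by rewrite -expr2 sqr_ge0.
    by move=> /allP /(_ i (mem_index_enum _)); rewrite mulf_eq0 orbb => /eqP.
  have -> : p = 0 by rewrite /p /dotp big1 // => i _; rewrite w0 mulr0.
  by rewrite expr0n mulr_ge0 ?dotpp_ge0.
have B_pos : 0 < B by rewrite lt_def B_gt0 dotpp_ge0.
have := dotpp_ge0 (B *: u - p *: w).
rewrite !(dotpDl, dotpDr, dotpNl, dotpNr, dotpZl, dotpZr) -/A -/B -/p (dotpC w u) -/p.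
move=> h; have : 0 <= B * (A * B - p ^+ 2) by nra.
by rewrite pmulr_rge0 // subr_ge0.
Qed.

Lemma normr_dotp_le u w : `|dotp u w| <= enorm u * enorm w.
Proof.
rewrite /enorm -sqrtrM ?dotpp_ge0 // -sqrtr_sqr.
exact/ler_wsqrtr/dotp_CauchySchwarz.
Qed.

Lemma ler_enormD u w : enorm (u + w) <= enorm u + enorm w.
Proof.
have /ler_normlP [_ uw] := normr_dotp_le u w.
have : enorm (u + w) ^+ 2 <= (enorm u + enorm w) ^+ 2.
  by rewrite sqrrD !sqr_enorm dotpDl !dotpDr (dotpC w u); lra.
have := enorm_ge0 (u + w); have := enorm_ge0 u; have := enorm_ge0 w; nra.
Qed.

Lemma normr_coord_le_enorm u i : `|u ord0 i| <= enorm u.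
Proof. by have := normr_dotp_le u (ebasis R i); rewrite dotp_ebasis enorm_ebasis mulr1. Qed.

Definition enorm_lipschitz (L : R) (f : vec -> vec) :=
  forall u w, enorm (f u - f w) <= L * enorm (u - w).

Lemma lipschitz_const_ge0 (f : vec -> vec) (L : R) : enorm_lipschitz L f ->
  0 <= L \/ forall u, enorm u = 0.
Proof.
move=> fL; have [L0|L_lt0] := leP 0 L; [by left | right] => u.
have := le_trans (enorm_ge0 _) (fL u 0); rewrite subr0.
by have := enorm_ge0 u; nra.
Qed.

End Euclid.

Lemma is_derive_linear (R : numFieldType) (V W : normedModType R)
    (f : {linear V -> W}) (x v : V) :
  continuous f -> is_derive x v f (f v).
Proof.
move=> cf; have df := linear_differentiable x cf.
by apply: DeriveDef; [exact: diff_derivable | rewrite deriveE // diff_lin].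
Qed.

Lemma derive_even0 (R : realType) (V : normedModType R) (f : V -> R) (v : V) :
  differentiable f 0 -> (forall x, f (- x) = f x) -> 'D_v f 0 = 0.
Proof.
move=> df f_even.
have Dv_Nv : 'D_v f 0 = 'D_(- v) f 0.
  rewrite /derive (_ : (fun h : R => h^-1 *: ((f \o shift 0) (h *: - v) - f 0))
                       = (fun h : R => h^-1 *: ((f \o shift 0) (h *: v) - f 0))) //.
  by apply/funext => h /=; rewrite -[in LHS]f_even !addr0 scalerN opprK.
have DNv : 'D_(- v) f 0 = - 'D_v f 0 by rewrite !deriveE // linearN.
lra.
Qed.

Section Derivatives.
Variables (R : realType) (d : nat).
Local Notation vec := 'rV[R]_d.

Lemma is_derive_coord (x v : vec) j :
  is_derive x v (fun y : vec => y ord0 j) (v ord0 j).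
Proof.
have coord_linear : linear (fun y : vec => y ord0 j) by move=> k y z; rewrite !mxE.
pose f : {linear vec -> R} :=
  HB.pack (fun y : vec => y ord0 j) (GRing.isLinear.Build _ _ _ _ _ coord_linear).
exact: (@is_derive_linear _ _ _ f x v (@coord_continuous R 1 d ord0 j)).
Qed.

Lemma is_derive_dotpl (x v w : vec) :
  is_derive x v (fun y => dotp y w) (dotp v w).
Proof.
have -> : (fun y => dotp y w) = \sum_(i < d) w ord0 i *: (fun y : vec => y ord0 i).
  by apply/funext => y; rewrite fct_sumE; apply: eq_bigr => i _; rewrite /= mulrC.
rewrite /dotp (eq_bigr (fun i => w ord0 i *: v ord0 i)) => [|i _]; last exact: mulrC.
by apply: is_derive_sum => i; apply: is_deriveZ; exact: is_derive_coord.
Qed.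

Lemma is_derive_dotpr (x v w : vec) :
  is_derive x v (fun y => dotp w y) (dotp w v).
Proof.
rewrite dotpC (_ : (fun y => dotp w y) = (fun y => dotp y w)); first exact: is_derive_dotpl.
by apply/funext => y; rewrite dotpC.
Qed.

Lemma is_derive_sqr_enorm (x v : vec) :
  is_derive x v (fun y => enorm y ^+ 2) (2 * dotp x v).
Proof.
have -> : (fun y : vec => enorm y ^+ 2)
          = \sum_(i < d) ((fun y : vec => y ord0 i) * (fun y => y ord0 i)).
  by apply/funext => y; rewrite fct_sumE sqr_enorm.
rewrite /dotp mulr_sumr (eq_bigr (fun i => x ord0 i *: v ord0 i + x ord0 i *: v ord0 i));
  last by move=> i _; rewrite mulr2n mulrDl mul1r.
by apply: is_derive_sum => i; apply: is_deriveM; exact: is_derive_coord.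
Qed.

Lemma is_derive_grad (f : vec -> R) (x g : vec) :
  (forall i, is_derive x (ebasis R i) f (g ord0 i)) -> grad f x = g.
Proof. by move=> fg; apply/rowP => i; rewrite mxE derive_val. Qed.

Variables (U : vec -> R) (lam : R).
Local Notation c := (6 * (1 - gam lam) + lam).

Lemma is_derive_Hfun_x (x v w : vec) : differentiable U x ->
  is_derive x w (fun y => Hfun U lam y v)
    (24 * 'D_w U x + c * (2 * dotp x w) + 12 * dotp w v).
Proof.
move=> dU; have DU : is_derive x w U ('D_w U x) by apply/derivableP/diff_derivable.
have -> : (fun y => Hfun U lam y v) = 24 *: U + c *: (fun y => enorm y ^+ 2)
            + 12 *: (fun y => dotp y v) + cst (12 * enorm v ^+ 2).
  by apply/funext => y; rewrite /Hfun !fctE.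
apply: (is_derive_eq (is_deriveD (is_deriveD (is_deriveD (is_deriveZ 24 DU)
  (is_deriveZ c (is_derive_sqr_enorm _ _))) (is_deriveZ 12 (is_derive_dotpl _ _ _)))
  (is_derive_cst _ _ _))).
by rewrite addr0.
Qed.

Lemma is_derive_Hfun_v (x v w : vec) :
  is_derive v w (Hfun U lam x) (12 * dotp x w + 24 * dotp v w).
Proof.
have -> : Hfun U lam x = cst (24 * U x + c * enorm x ^+ 2)
            + 12 *: (fun y => dotp x y) + 12 *: (fun y => enorm y ^+ 2).
  by apply/funext => y; rewrite /Hfun !fctE.
apply: (is_derive_eq (is_deriveD (is_deriveD (is_derive_cst _ _ _)
  (is_deriveZ 12 (is_derive_dotpr _ _ _))) (is_deriveZ 12 (is_derive_sqr_enorm _ _)))).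
by rewrite add0r -[12 *: (2 * _)]/(12 * (2 * _)) mulrA -natrM.
Qed.

Lemma grad_Hfun_x (x v : vec) : differentiable U x ->
  grad (fun y => Hfun U lam y v) x = 24 *: grad U x + (2 * c) *: x + 12 *: v.
Proof.
move=> dU; apply: is_derive_grad => i; apply: is_derive_eq (is_derive_Hfun_x v _ dU) _.
by rewrite !mxE dotp_ebasis dotpC dotp_ebasis mulrCA mulrA.
Qed.

Lemma grad_Hfun_v (x v : vec) : grad (Hfun U lam x) v = 12 *: x + 24 *: v.
Proof.
apply: is_derive_grad => i; apply: is_derive_eq (is_derive_Hfun_v x v _) _.
by rewrite !mxE !dotp_ebasis.
Qed.

Lemma lapl_Hfun (x v : vec) : lapl (Hfun U lam x) v = 24 * d%:R.
Proof.
rewrite /lapl (eq_bigr (fun _ => 24)) ?sumr_const ?card_ord ?mulr_natr // => i _.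
set e := ebasis R i.
have -> : 'D_e (Hfun U lam x) = cst (12 * dotp x e) + 24 *: (fun w => dotp w e).
  by apply/funext => w; case: (is_derive_Hfun_v x w e) => _ ->.
case: (is_deriveD (is_derive_cst (12 * dotp x e) v e) (is_deriveZ 24 (is_derive_dotpl v e e))) => _ ->.
by rewrite add0r dotp_ebasis /e /ebasis mxE !eqxx; exact: mulr1.
Qed.

Lemma Lgen_Hfun (W : vec -> R) (mu : probability (borelRd R d) R) (x v : vec) :
  differentiable U x ->
  Lgen U W mu (Hfun U lam) x v =
  (2 * c - 12) * dotp x v - 12 * enorm v ^+ 2 - 12 * dotp (grad U x) x
  - 12 * dotp x (conv_grad W mu x) - 24 * dotp v (conv_grad W mu x) + 24 * d%:R.
Proof.
move=> dU; rewrite /Lgen grad_Hfun_x // grad_Hfun_v lapl_Hfun sqr_enorm.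
rewrite !(dotpDl, dotpDr, dotpZl, dotpZr) (dotpC v x) (dotpC v (grad U x)).
by rewrite (dotpC (conv_grad W mu x) x) (dotpC (conv_grad W mu x) v); ring.
Qed.

End Derivatives.

Lemma gam_le_half (R : realType) (lam : R) : 0 <= lam -> gam lam <= 2^-1.
Proof. by move=> lam_ge0; rewrite /gam ler_pdivrMr; lra. Qed.

Lemma mulr_gam (R : realType) (lam : R) : 0 <= lam -> gam lam * (2 * (lam + 1)) = lam.
Proof. by move=> lam_ge0; rewrite /gam divfK //; lra. Qed.

Section Lyapunov.
Variables (R : realType) (d : nat).
Local Notation vec := 'rV[R]_d.
Variables (U : vec -> R) (lam : R).

Lemma Hfun_ge (x v : vec) : 0 <= lam ->
  24 * U x + lam * enorm x ^+ 2 + 12 * enorm (v + 2^-1 *: x) ^+ 2 <= Hfun U lam x v.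
Proof.
move=> /gam_le_half.
rewrite /Hfun !sqr_enorm !(dotpDl, dotpDr, dotpZl, dotpZr) (dotpC x v).
have := dotpp_ge0 x; nra.
Qed.

Lemma Hfun_ge0 (x v : vec) : 0 <= lam -> (forall x, 0 <= U x) -> 0 <= Hfun U lam x v.
Proof.
move=> lam_ge0 U_ge0; apply: le_trans (Hfun_ge x v lam_ge0).
have := mulr_ge0 lam_ge0 (sqr_ge0 (enorm x)).
have := U_ge0 x; have := sqr_ge0 (enorm (v + 2^-1 *: x)); lra.
Qed.

Lemma Hfun_ge_sqr_enormD (x v : vec) : 0 < lam -> (forall x, 0 <= U x) ->
  (enorm x + enorm v) ^+ 2 * (2 * lam) <= (lam + 9) * Hfun U lam x v.
Proof.
move=> lam_gt0 U_ge0.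
have H_ge : lam * enorm x ^+ 2 + 3 * (enorm x - 2 * enorm v) ^+ 2 <= Hfun U lam x v.
  have /ler_normlP [xv_ge _] := normr_dotp_le x v.
  have := gam_le_half (ltW lam_gt0); have := U_ge0 x; have := sqr_ge0 (enorm x).
  by rewrite /Hfun; nra.
move: (enorm x) (enorm v) H_ge => a b H_ge.
have lam9_ge0 : 0 <= lam + 9 by lra.
apply: le_trans (ler_wpM2l lam9_ge0 H_ge).
have := sqr_ge0 (a - 2 * b); have := mulr_ge0 (sqr_ge0 lam) (sqr_ge0 a).
have : 0 <= lam * (3 * a + (a - 2 * b)) ^+ 2 by apply: mulr_ge0; [lra|apply: sqr_ge0].
have : 0 <= lam * (a - 2 * b) ^+ 2 by apply: mulr_ge0; [lra|apply: sqr_ge0].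
nra.
Qed.

Lemma Hfun_coercive (M : R) : 0 < lam -> (forall x, 0 <= U x) ->
  exists r : R, forall x v : vec, r < enorm x + enorm v -> M < Hfun U lam x v.
Proof.
move=> lam_gt0 U_ge0.
have [K K_gt0 KH_ge] : exists2 K : R, 0 < K &
    forall x v, (enorm x + enorm v) ^+ 2 <= K * Hfun U lam x v.
  exists ((lam + 9) / (2 * lam)) => [|x v]; first by rewrite divr_gt0 //; lra.
  by rewrite mulrAC ler_pdivlMr ?Hfun_ge_sqr_enormD //; lra.
exists (Num.max 1 (K * M)) => x v; rewrite gt_max => /andP [ab_gt1 ab_gtKM].
have : enorm x + enorm v <= (enorm x + enorm v) ^+ 2 by rewrite expr2 ler_peMr //; lra.
have := KH_ge x v; rewrite -(ltr_pM2l K_gt0); lra.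
Qed.

End Lyapunov.

Section DriftArithmetic.
Variable R : realFieldType.

Lemma drift_quadratic_le0 (lam L a b m : R) :
  0 < lam -> L <= lam / 8 -> 0 <= L \/ m = 0 -> 0 <= a -> 0 <= b -> 0 <= m ->
  2 * lam * a * b - 6 * b ^+ 2 - (9 / 4 * lam + 3 * lam ^+ 2) * a ^+ 2
  + 12 * a * L * (a + m) + 24 * b * L * (a + m) - L * (6 + 8 * lam) * m ^+ 2 <= 0.
Proof.
move=> lam_gt0 L_le [L_ge0|->] a_ge0 b_ge0 m_ge0; last first.
  have : 0 <= (lam * a - b) ^+ 2 by apply: sqr_ge0.
  have := mulr_ge0 a_ge0 b_ge0; have := sqr_ge0 a; have := sqr_ge0 b.
  rewrite addr0 expr0n /= mulr0 subr0.
  nra.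
have sqr_mb : 0 <= 2 * L * (2 * lam * m - 3 * b) ^+ 2 by apply: mulr_ge0; [lra|apply: sqr_ge0].
have sqr_am : 0 <= 6 * L * (a - m) ^+ 2 by apply: mulr_ge0; [lra|apply: sqr_ge0].
have form_ab : 0 <= lam * (3 * (lam * a) ^+ 2 - 5 * (lam * a) * b + 15 / 4 * b ^+ 2).
  apply: mulr_ge0; first lra.
  have := sqr_ge0 (6 * (lam * a) - 5 * b); have := sqr_ge0 b; nra.
have gap_ab : 0 <= (lam / 8 - L) * (a * b) by apply: mulr_ge0; [lra|apply: mulr_ge0].
have gap_b : 0 <= (lam / 8 - L) * b ^+ 2 by apply: mulr_ge0; [lra|apply: sqr_ge0].
have gap_a : 0 <= (lam / 8 - L) * a ^+ 2 by apply: mulr_ge0; [lra|apply: sqr_ge0].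
suff : lam * (2 * lam * a * b - 6 * b ^+ 2 - (9 / 4 * lam + 3 * lam ^+ 2) * a ^+ 2
  + 12 * a * L * (a + m) + 24 * b * L * (a + m) - L * (6 + 8 * lam) * m ^+ 2) <= 0 by nra.
nra.
Qed.

(* Read a = |x|, b = |v|, m = \int |y| dmu, Ux = U(x), s = x.v, q = grad U(x).x,
   xF = x.F, vF = v.F with F = (grad W * mu)(x), and n = d. *)
Lemma drift_le (lam g L A At n Ux a b m s q xF vF : R) :
  0 < lam -> g * (2 * (lam + 1)) = lam -> L < lam / 8 -> 0 <= L \/ m = 0 ->
  0 <= a -> 0 <= b -> 0 <= m -> s <= a * b ->
  lam * (Ux + a ^+ 2 / 4) - A <= 2^-1 * q -> lam / 6 * a ^+ 2 - At <= Ux ->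
  - (a * (L * (a + m))) <= xF -> - (b * (L * (a + m))) <= vF ->
  (2 * (6 * (1 - g) + lam) - 12) * s - 12 * b ^+ 2 - 12 * q - 12 * xF - 24 * vF + 24 * n
  <= 24 * (A + (lam - g) * At + n) + L * (6 + 8 * lam) * m ^+ 2
     - (3 / 4 * lam + lam ^+ 2) * a ^+ 2
     - g * (24 * Ux + (6 * (1 - g) + lam) * a ^+ 2 + 12 * s + 12 * b ^+ 2).
Proof.
move=> lam_gt0 gE L_lt L_ge0_or_m0 a_ge0 b_ge0 m_ge0 s_le q_ge Ux_ge xF_ge vF_ge.
have den_gt0 : 0 < 2 * (lam + 1) by lra.
have g_gt0 : 0 < g by move: den_gt0 gE; nra.
have g_le : g <= 1 / 2 by nra.
have g_lam : 6 * g + 5 * lam * g <= 3 * lam by nra.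
have lam_g_ge0 : 0 <= lam - g by nra.
have q_term : - 12 * q <= - 24 * lam * Ux - 6 * lam * a ^+ 2 + 24 * A by lra.
have U_term : - 24 * (lam - g) * Ux <= - 4 * lam * (lam - g) * a ^+ 2 + 24 * (lam - g) * At.
  have : 0 <= (lam - g) * (Ux - (lam / 6 * a ^+ 2 - At)) by apply: mulr_ge0; lra.
  nra.
have s_term : 2 * lam * s <= 2 * lam * (a * b) by nra.
have b_term : (12 * g - 12) * b ^+ 2 <= - 6 * b ^+ 2 by have := sqr_ge0 b; nra.
have a_term : (6 * g + 5 * lam * g) * a ^+ 2 <= 3 * lam * a ^+ 2 by have := sqr_ge0 a; nra.
have := mulr_ge0 (sqr_ge0 g) (sqr_ge0 a).
have := drift_quadratic_le0 lam_gt0 (ltW L_lt) L_ge0_or_m0 a_ge0 b_ge0 m_ge0.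
nra.
Qed.

End DriftArithmetic.

Section ProbabilityRintegral.
Context d (T : measurableType d) (R : realType) (mu : probability T R).

Lemma Rintegral_cst_probability (k : R) : \int[mu]_(_ in setT) k = k.
Proof.
rewrite Rintegral_cst //; have -> : fine (mu setT) = 1 by rewrite probability_setT.
exact: mulr1.
Qed.

Lemma integrableMl (c : R) (f : T -> R) :
  mu.-integrable setT (EFin \o f) -> mu.-integrable setT (EFin \o (fun y => c * f y)).
Proof.
move=> intf; apply: (eq_integrable measurableT _ _ _ (integrableZl measurableT c intf)).
by move=> y _ /=; rewrite EFinM.
Qed.

Lemma integrable_affine (k c : R) (f : T -> R) :
  mu.-integrable setT (EFin \o f) ->
  mu.-integrable setT (EFin \o (fun y => k + c * f y)).
Proof.
move=> intf; apply: (eq_integrable measurableT _ _ _ (integrableD measurableT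
  (finite_measure_integrable_cst mu k measurableT) (integrableMl c intf))).
by move=> y _ /=; rewrite EFinD.
Qed.

Lemma Rintegral_affine (k c : R) (f : T -> R) :
  mu.-integrable setT (EFin \o f) ->
  \int[mu]_y (k + c * f y) = k + c * \int[mu]_y f y.
Proof.
move=> intf; rewrite RintegralD //; last exact: integrableMl.
  by rewrite Rintegral_cst_probability RintegralZl.
exact: finite_measure_integrable_cst.
Qed.

Lemma integrable_sumR (I : Type) (s : seq I) (h : I -> T -> R) :
  (forall i, mu.-integrable setT (EFin \o h i)) ->
  mu.-integrable setT (EFin \o (fun y => \sum_(i <- s) h i y)).
Proof.
move=> inth; apply: (eq_integrable measurableT _ _ _ (integrable_sum measurableT s
  (P := predT) (h := fun i y => (h i y)%:E) (fun i _ => inth i))).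
by move=> y _ /=; rewrite sumEFin.
Qed.

Lemma Rintegral_sum (I : Type) (s : seq I) (h : I -> T -> R) :
  (forall i, mu.-integrable setT (EFin \o h i)) ->
  \int[mu]_y (\sum_(i <- s) h i y) = \sum_(i <- s) \int[mu]_y h i y.
Proof.
move=> inth; elim: s => [|i s IHs].
  under eq_Rintegral do rewrite big_nil.
  by rewrite big_nil Rintegral_cst_probability.
under eq_Rintegral do rewrite big_cons.
by rewrite RintegralD // ?IHs ?big_cons //; exact: integrable_sumR.
Qed.

End ProbabilityRintegral.

Section Convolution.
Variables (R : realType) (d : nat).
Local Notation vec := 'rV[R]_d.
Local Notation B := (borelRd R d).

Lemma continuous_measurable_borelRd (f : vec -> R) :
  continuous f -> measurable_fun setT (f : B -> R).
Proof.
move=> /continuousP f_cont.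
apply: (measurability _ (measurable_realfun.RGenOpens.measurableE R)).
move=> _ [_ [a [b ->] <-]]; apply: sub_sigma_algebra; rewrite setTI.
exact/f_cont/interval_open.
Qed.

Variable mu : probability B R.

Lemma moment1_ge0 : 0 <= moment1 mu.
Proof. by apply: Rintegral_ge0 => y _; exact: enorm_ge0. Qed.

Lemma moment1_eq0 : (forall u : vec, enorm u = 0) -> moment1 mu = 0.
Proof.
move=> enorm0; rewrite /moment1; under eq_Rintegral do rewrite enorm0.
exact: Rintegral_cst_probability.
Qed.

Variables (W : vec -> R) (L : R).

Lemma enorm_grad_shift_le (x y : vec) :
  grad W 0 = 0 -> 0 <= L -> enorm_lipschitz L (grad W) ->
  enorm (grad W (x - y)) <= L * (enorm x + enorm y).
Proof.
move=> W0 L_ge0 W_lip; have := W_lip (x - y) 0; rewrite W0 !subr0 => /le_trans; apply.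
by apply: ler_wpM2l => //; rewrite -(enormN y); exact: ler_enormD.
Qed.

Lemma continuous_grad_shift_coord (x : vec) i :
  continuous (grad W) -> continuous (fun y : vec => grad W (x - y) ord0 i).
Proof.
move=> W_cont y.
have sub_cont : {for y, continuous (fun y : vec => x - y)}.
  by apply: (continuousB (f := cst x) (g := id)); [exact: cst_continuous|].
exact: continuous_comp (continuous_comp sub_cont (W_cont (x - y)))
  (@coord_continuous R 1 d ord0 i _).
Qed.

Lemma integrable_grad_shift_coord (x : vec) i :
  continuous (grad W) -> grad W 0 = 0 -> 0 <= L -> enorm_lipschitz L (grad W) ->
  finite_moment1 mu ->
  mu.-integrable setT (EFin \o (fun y : B => grad W (x - y) ord0 i)).
Proof.
move=> W_cont W0 L_ge0 W_lip fm.
apply: (le_integrable measurableT _ _ (integrable_affine (L * enorm x) L fm)).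
  apply/measurable_realfun.measurable_EFinP; apply: continuous_measurable_borelRd.
  exact: continuous_grad_shift_coord.
move=> y _ /=; rewrite lee_fin.
apply: le_trans (normr_coord_le_enorm _ i) _.
apply: le_trans (enorm_grad_shift_le x y W0 L_ge0 W_lip) _.
by rewrite -mulrDr ler_norm.
Qed.

Lemma dotp_conv_grad (x u : vec) :
  (forall i, mu.-integrable setT (EFin \o (fun y : B => grad W (x - y) ord0 i))) ->
  dotp u (conv_grad W mu x) = \int[mu]_y dotp u (grad W (x - y)).
Proof.
move=> int_coord; rewrite /dotp Rintegral_sum => [|i].
  by apply: eq_bigr => i _; rewrite mxE RintegralZl.
exact: integrableMl.
Qed.

Lemma dotp_conv_grad_ge (x u : vec) :
  continuous (grad W) -> grad W 0 = 0 -> enorm_lipschitz L (grad W) -> finite_moment1 mu ->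
  - (enorm u * (L * (enorm x + moment1 mu))) <= dotp u (conv_grad W mu x).
Proof.
move=> W_cont W0 W_lip fm.
have [L_ge0|enorm0] := lipschitz_const_ge0 W_lip; last first.
  have /ler_normlP [uF_ge _] := normr_dotp_le u (conv_grad W mu x).
  rewrite !enorm0 !mul0r in uF_ge *; lra.
rewrite dotp_conv_grad => [|i]; last exact: integrable_grad_shift_coord.
have -> : - (enorm u * (L * (enorm x + moment1 mu)))
    = \int[mu]_y (- (enorm u * L * enorm x) + - (enorm u * L) * enorm y).
  by rewrite Rintegral_affine // /moment1; ring.
apply: le_Rintegral => //.
- exact: integrable_affine.
- by apply: integrable_sumR => i; apply: integrableMl; exact: integrable_grad_shift_coord.
- move=> y _; have /ler_normlP [+ _] := normr_dotp_le u (grad W (x - y)).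
  have := ler_wpM2l (enorm_ge0 u) (enorm_grad_shift_le x y W0 L_ge0 W_lip).
  lra.
Qed.

End Convolution.

Theorem lemma2p1 (R : realType) (d : nat) (U W : vec R d -> R)
  (lam A LU LW At : R)
  (* regularity *)
  (hU : C1 U) (hW : C1 W)
  (* (A1) *)
  (hU0 : forall x, 0 <= U x) (hlam : 0 < lam) (hA : 0 <= A)
  (hA1 : forall x, (2%:R)^-1 * dotp (grad U x) x
                   >= lam * (U x + enorm x ^+ 2 / 4%:R) - A)
  (* (A2) *)
  (hA2 : forall x y, enorm (grad U x - grad U y) <= LU * enorm (x - y))
  (* (A3) *)
  (hWeven : forall x, W (- x) = W x)
  (hA3 : forall x y, enorm (grad W x - grad W y) <= LW * enorm (x - y))
  (hLW : LW < lam / 8%:R)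
  (* the constant A~ *)
  (hAt : 0 <= At)
  (hUAt : forall x, U x >= lam / 6%:R * enorm x ^+ 2 - At) :
  (forall (mu : probability (borelRd R d) R), finite_moment1 mu ->
   forall x v : vec R d,
     Hfun U lam x v >= 24%:R * U x + lam * enorm x ^+ 2
                       + 12%:R * enorm (v + (2%:R)^-1 *: x) ^+ 2
  /\ Lgen U W mu (Hfun U lam) x v
       <= Bconst d lam A At + LW * (6%:R + 8%:R * lam) * moment1 mu ^+ 2
          - (3%:R / 4%:R * lam + lam ^+ 2) * enorm x ^+ 2
          - gam lam * Hfun U lam x v
  /\ Lgen U W mu (Hfun U lam) x v
       <= Bconst d lam A At
          + (moment1 mu ^+ 2 - enorm x ^+ 2) * (3%:R / 4%:R * lam + lam ^+ 2)
          - gam lam * Hfun U lam x v)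
  /\ (forall x v : vec R d, 0 <= Hfun U lam x v)
  /\ (forall M : R, exists r : R, forall x v : vec R d,
        r < enorm x + enorm v -> M < Hfun U lam x v).
Proof.
have [U_diff _] := hU; have [W_diff W_cont] := hW.
have W0 : grad W 0 = 0 by apply/rowP => i; rewrite !mxE; exact: derive_even0.
split; last split; last 2 first.
- by move=> x v; exact: Hfun_ge0 (ltW hlam) hU0.
- by move=> M; exact: Hfun_coercive.
move=> mu fm x v; split; first exact: Hfun_ge (ltW hlam).
(* L_W < 0 is only possible in dimension 0, where all norms vanish. *)
have L_ge0_or_m0 : 0 <= LW \/ moment1 mu = 0.
  by case: (lipschitz_const_ge0 hA3) => [|/moment1_eq0]; [left|right].
have /ler_normlP [_ xv_le] := normr_dotp_le x v.
have := drift_le d%:R hlam (mulr_gam (ltW hlam)) hLW L_ge0_or_m0 (enorm_ge0 x) (enorm_ge0 v)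
  (moment1_ge0 mu) xv_le (hA1 x) (hUAt x) (dotp_conv_grad_ge x x W_cont W0 hA3 fm)
  (dotp_conv_grad_ge x v W_cont W0 hA3 fm).
have LW_moment : LW * (6 + 8 * lam) * moment1 mu ^+ 2
                 <= (3 / 4 * lam + lam ^+ 2) * moment1 mu ^+ 2.
  by apply: ler_wpM2r; [exact: sqr_ge0 | nra].
rewrite -Lgen_Hfun // /Bconst /Hfun; split; lra.
Qed.
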